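(* Let $p$ be a prime greater than $3$ and let $x$ be an indeterminate. Then $$\sum_{k=0}^{[p/3]}\frac{(3k)!}{27^k\,k!^3}\big(x^k-(-1)^{[p/3]}(1-x)^k\big)\equiv0\pmod p.$$
   Context: $[y]$ is the greatest integer not exceeding $y$. The congruence is coefficientwise for polynomials with rational coefficients having denominators prime to $p$. *)

From mathcomp Require Import all_boot all_order all_algebra.
Set Implicit Arguments. Unset Strict Implicit. Unset Printing Implicit Defensive.
Import Order.TTheory GRing.Theory Num.Theory.
Local Open Scope ring_scope.

(* A rational c is p-integral (denominator prime to p) and congruent to 0 mod p:
   in lowest terms, p divides the numerator and does not divide the denominator. *)
Definition rat_cong0 (p : nat) (c : rat) : bool :=
  (p%:Z %| numq c)%Z && ~~ (p%:Z %| denq c)%Z.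

Definition poly_cong0 (p : nat) (P : {poly rat}) : Prop :=
  forall i : nat, rat_cong0 p P`_i.

Definition coefA (k : nat) : rat :=
  ((3 * k)`!)%:R / ((27 ^ k * (k`!) ^ 3)%N)%:R.

(* Let n = [p/3]. Then p divides (3n+1)(3n+2), i.e. n is -1/3 or -2/3 modulo p, so with
   m = p-1-n = -1-n the coefficient (3k)!/(27^k k!^3) = prod_(j<k) (j+1/3)(j+2/3) / k!^2 is
   congruent to C(n,k) C(m,k). Over F_p it thus suffices to show
     sum_k C(n,k) C(m,k) x^k = (-1)^n sum_k C(n,k) C(m,k) (1-x)^k.
   By Vandermonde's identity the coefficient of x^i on the right is (-1)^(n+i) C(n,i) C(p-1-i,n),
   and C(p-1-a,b) = (-1)^b C(a+b,b) mod p turns both C(m,i) and C(p-1-i,n) into C(n+i,i).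
   The congruence of rationals is recovered because reduction modulo p is a ring morphism on
   the p-integral rationals. *)

From mathcomp Require Import all_boot all_order all_algebra.
From mathcomp Require Import zify ring.
Set Implicit Arguments. Unset Strict Implicit. Unset Printing Implicit Defensive.
Import GRing.Theory.

Lemma mul_bin_bin n k i : k <= n -> 'C(n, k) * 'C(k, i) = 'C(n, i) * 'C(n - i, n - k).
Proof.
move=> le_kn; have [le_ik | lt_ki] := leqP i k; last first.
  rewrite (bin_small lt_ki) muln0; have [le_in | /bin_small-> //] := leqP i n.
  by rewrite (@bin_small (n - i)) ?muln0 //; lia.
have le_in : i <= n by apply: leq_trans le_kn.
have le_nk_ni : n - k <= n - i by lia.
have lhs : 'C(n, k) * 'C(k, i) * (i`! * (k - i)`! * (n - k)`!) = n`!.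
  by rewrite -(bin_fact le_kn) -(bin_fact le_ik); ring.
have rhs : 'C(n, i) * 'C(n - i, n - k) * (i`! * (k - i)`! * (n - k)`!) = n`!.
  rewrite -(bin_fact le_in) -(bin_fact le_nk_ni) (_ : n - i - (n - k) = k - i); last by lia.
  ring.
apply/eqP; rewrite -(eqn_pmul2r (_ : 0 < i`! * (k - i)`! * (n - k)`!)) ?lhs ?rhs //.
by rewrite !muln_gt0 !fact_gt0.
Qed.

Lemma sum_bin_bin_bin n m i :
  \sum_(k < n.+1) 'C(n, k) * 'C(m, k) * 'C(k, i) = 'C(n, i) * 'C(m + (n - i), n).
Proof.
rewrite -binomial.Vandermonde big_distrr /=; apply: eq_bigr => k _.
by rewrite mulnAC mul_bin_bin -1?ltnS // mulnAC mulnA.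
Qed.

Lemma prime_gt3_div3 p :
  prime p -> 3 < p -> p = (3 * (p %/ 3)).+1 \/ p = (3 * (p %/ 3)).+2.
Proof.
move=> p_pr lt3p; have : ~~ (3 %| p).
  by apply/negP => /(prime_nt_dvdP p_pr) -/(_ isT) p3; rewrite -p3 in lt3p.
lia.
Qed.

Local Open Scope ring_scope.

Lemma coef_1subX_expr (R : comNzRingType) k i :
  ((1 - 'X) ^+ k : {poly R})`_i = (-1) ^+ i * 'C(k, i)%:R.
Proof.
rewrite addrC exprD1n coef_sum.
rewrite (eq_bigr (fun j : 'I_k.+1 =>
  if j == i :> nat then (-1) ^+ j * 'C(k, j)%:R else 0)).
  rewrite -big_mkcond (big_ord1_eq _ (fun j => (-1) ^+ j * 'C(k, j)%:R)) ltnS.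
  by case: leqP => // /bin_small ->; rewrite mulr0.
move=> j _; rewrite coefMn -scaleN1r exprZn coefZ coefXn eq_sym.
by case: eqP => [->|_]; rewrite ?mulr1 ?mulr0 ?mul0rn ?mulr_natr.
Qed.

(* The induction step rests on 9 (n - k) (m - k) = (3k + 1) (3k + 2), which is what the
   hypotheses m = -1 - n and (3n + 1) (3n + 2) = 0 give. *)
Lemma fact_mul3_bin (R : comNzRingType) n m k :
    n%:R + m%:R + 1 = 0 :> R -> ((3 * n).+1 * (3 * n).+2)%:R = 0 :> R ->
    (k <= n)%N -> (k <= m)%N ->
  (27 ^ k * k`! ^ 3)%:R * ('C(n, k) * 'C(m, k))%:R = (3 * k)`!%:R :> R.
Proof.
move=> nm0 prod0; elim: k => [|k IHk] lekn lekm; first by rewrite !bin0 mulr1.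
have mulSbin j : (k < j)%N ->
    k.+1%:R * 'C(j, k.+1)%:R = (j%:R - k%:R) * 'C(j, k)%:R :> R.
  by move=> ltkj; rewrite -!natrM mul_bin_left natrM natrB // ltnW.
have step : 27 * k.+1%:R * ((n%:R - k%:R) * (m%:R - k%:R)) =
             ((3 * k).+3 * (3 * k).+2 * (3 * k).+1)%:R :> R.
  have -> : m%:R = - n%:R - 1 :> R by rewrite -[LHS]subr0 -nm0; ring.
  apply/eqP; rewrite -subr_eq0; apply/eqP.
  transitivity (- 3 * k.+1%:R * ((3 * n).+1 * (3 * n).+2)%:R : R); first by ring.
  by rewrite prod0 mulr0.
transitivity (27 * k.+1%:R * ((k.+1%:R * 'C(n, k.+1)%:R) * (k.+1%:R * 'C(m, k.+1)%:R))
              * (27 ^ k * k`! ^ 3)%:R : R).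
  by rewrite factS expnS !natrM !natrX; ring.
rewrite !mulSbin // (_ : 3 * k.+1 = (3 * k).+3)%N; last by lia.
transitivity (27 * k.+1%:R * ((n%:R - k%:R) * (m%:R - k%:R))
              * ((27 ^ k * k`! ^ 3)%:R * ('C(n, k) * 'C(m, k))%:R) : R).
  by rewrite natrM; ring.
by rewrite step IHk 1?ltnW // !factS !natrM; ring.
Qed.

Lemma numq_frac_cross (a b : int) : b != 0 ->
  numq (a%:~R / b%:~R) * b = a * denq (a%:~R / b%:~R).
Proof.
move=> b_neq0; apply: (@intr_inj rat); apply/eqP.
by rewrite !intrM -eqr_div ?intr_eq0 ?denq_neq0 // divq_num_den.
Qed.

Lemma denq_frac_dvdz (a b : int) : b != 0 -> (denq (a%:~R / b%:~R) %| b)%Z.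
Proof.
move=> b_neq0; have : (denq (a%:~R / b%:~R) %| numq (a%:~R / b%:~R) * b)%Z.
  by rewrite numq_frac_cross // dvdz_mull.
by rewrite Gauss_dvdzr // coprimez_sym coprimezE coprime_num_den.
Qed.

Lemma frac_addE (K : fieldType) (a b a' b' : int) :
    b%:~R != 0 :> K -> b'%:~R != 0 :> K ->
  a%:~R / b%:~R + a'%:~R / b'%:~R = (a * b' + a' * b)%:~R / (b * b')%:~R :> K.
Proof. by move=> b_neq0 b'_neq0; rewrite intrD !intrM; field; apply/andP. Qed.

Lemma frac_mulE (K : fieldType) (a b a' b' : int) :
  a%:~R / b%:~R * (a'%:~R / b'%:~R) = (a * a')%:~R / (b * b')%:~R :> K.
Proof. by rewrite !intrM invfM mulrACA. Qed.

Section PrimeCharacteristic.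
Variables (F : fieldType) (p : nat).
Hypothesis charFp : p \in [pchar F].

Lemma natr_pchar_neq0 n : (0 < n < p)%N -> n%:R != 0 :> F.
Proof. by case/andP=> n_gt0 ltnp; rewrite -(dvdn_pcharf charFp) gtnNdvd. Qed.

Lemma fact_pchar_neq0 k : (k < p)%N -> k`!%:R != 0 :> F.
Proof.
elim: k => [|k IHk] ltkp; first by rewrite oner_neq0.
by rewrite factS natrM mulf_neq0 ?IHk ?natr_pchar_neq0 // ltnW.
Qed.

Lemma bin_pred_sub_pchar a b : (a + b < p)%N ->
  'C(p.-1 - a, b)%:R = (-1) ^+ b * 'C(a + b, b)%:R :> F.
Proof.
elim: b => [|b IHb] lt_abp; first by rewrite !bin0 mul1r.
have b1_neq0 : b.+1%:R != 0 :> F by rewrite natr_pchar_neq0 //; lia.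
apply: (mulfI b1_neq0); rewrite -natrM mul_bin_left natrM IHb; last by lia.
rewrite [RHS]mulrCA -natrM -mul_bin_diag addnS natrM.
rewrite (_ : p.-1 - a - b = p - (a + b).+1)%N ?natrB ?(pcharf0 charFp) /=; try lia.
by rewrite exprS; ring.
Qed.

Lemma sum_bin_reflection_pchar n : (2 * n < p)%N ->
  \sum_(0 <= k < n.+1)
    ('C(n, k) * 'C(p.-1 - n, k))%:R *: ('X^k - (-1) ^+ n *: (1 - 'X) ^+ k) = 0 :> {poly F}.
Proof.
move=> lt2np; apply/polyP => i; rewrite coef0 coef_sum.
under eq_bigr do rewrite coefZ coefB coefXn coefZ coef_1subX_expr mulrBr.
rewrite sumrB.
have diag : \sum_(0 <= k < n.+1) ('C(n, k) * 'C(p.-1 - n, k))%:R * (i == k)%:R =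
            ('C(n, i) * 'C(p.-1 - n, i))%:R :> F.
  rewrite (eq_bigr (fun k => if k == i then ('C(n, k) * 'C(p.-1 - n, k))%:R else 0)).
    rewrite -big_mkcond big_nat1_eq /= ltnS.
    by case: leqP => // /bin_small ->; rewrite mul0n.
  by move=> k _; rewrite eq_sym; case: eqP => [->|_]; rewrite ?mulr1 ?mulr0.
have vandermonde : \sum_(0 <= k < n.+1)
      ('C(n, k) * 'C(p.-1 - n, k))%:R * ((-1) ^+ n * ((-1) ^+ i * 'C(k, i)%:R)) =
    (-1) ^+ n * (-1) ^+ i * ('C(n, i) * 'C(p.-1 - n + (n - i), n))%:R :> F.
  rewrite -sum_bin_bin_bin natr_sum mulr_sumr big_mkord.
  by apply: eq_bigr => k _; rewrite !natrM; ring.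
rewrite diag vandermonde; apply/eqP; rewrite subr_eq0; apply/eqP.
have [le_in | /bin_small-> ] := leqP i n; last by rewrite !mul0n mulr0.
rewrite (_ : p.-1 - n + (n - i) = p.-1 - i)%N; last by lia.
rewrite !natrM !bin_pred_sub_pchar; try lia.
rewrite -[X in 'C(i + n, X)](addKn i n) (bin_sub (leq_addr n i)) addnC.
by rewrite -(signr_odd _ n); case: (odd n); ring.
Qed.

(* [c] is p-integral and [y] is its residue: [ratr] maps [a / b] to [a / b] computed in [F]. *)
Definition reduces_to (c : rat) (y : F) : Prop := ~~ (p%:Z %| denq c)%Z /\ ratr c = y.

Lemma Euclid_dvdz_pchar (a b : int) :
  (p%:Z %| a * b)%Z = (p%:Z %| a)%Z || (p%:Z %| b)%Z.
Proof. by rewrite !(dvdz_pcharf charFp) intrM mulf_eq0. Qed.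

Lemma reduces_to_frac (a b : int) :
  ~~ (p%:Z %| b)%Z -> reduces_to (a%:~R / b%:~R) (a%:~R / b%:~R).
Proof.
move=> pNb; have b_neq0 : b != 0 by apply: contraNneq pNb => ->; rewrite dvdz0.
have pNd : ~~ (p%:Z %| denq (a%:~R / b%:~R))%Z.
  by apply: contra pNb => /dvdz_trans; apply; apply: denq_frac_dvdz.
split=> //; apply/eqP; rewrite /ratr eqr_div -?(dvdz_pcharf charFp) //.
by rewrite -!intrM numq_frac_cross.
Qed.

Lemma reduces_to_int (z : int) : reduces_to z%:~R z%:~R.
Proof.
have pN1 : ~~ (p%:Z %| 1)%Z by rewrite (dvdz_pcharf charFp) oner_neq0.
by have := reduces_to_frac z pN1; rewrite !divr1.
Qed.

Lemma reduces_toD c c' y y' :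
  reduces_to c y -> reduces_to c' y' -> reduces_to (c + c') (y + y').
Proof.
move=> [pNd <-] [pNd' <-].
rewrite /ratr -{1}(divq_num_den c) -{1}(divq_num_den c').
rewrite !frac_addE ?intr_eq0 ?denq_neq0 -?(dvdz_pcharf charFp) //.
by apply: reduces_to_frac; rewrite Euclid_dvdz_pchar negb_or pNd.
Qed.

Lemma reduces_toM c c' y y' :
  reduces_to c y -> reduces_to c' y' -> reduces_to (c * c') (y * y').
Proof.
move=> [pNd <-] [pNd' <-].
rewrite /ratr -{1}(divq_num_den c) -{1}(divq_num_den c') !frac_mulE.
by apply: reduces_to_frac; rewrite Euclid_dvdz_pchar negb_or pNd.
Qed.

Lemma reduces_to_sum (I : Type) (r : seq I) (P : pred I) (f : I -> rat) (g : I -> F) :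
    (forall i, P i -> reduces_to (f i) (g i)) ->
  reduces_to (\sum_(i <- r | P i) f i) (\sum_(i <- r | P i) g i).
Proof.
move=> fg; apply: big_ind2 => //.
  by have := reduces_to_int 0; rewrite !rmorph0.
by move=> c y c' y'; apply: reduces_toD.
Qed.

Lemma rat_cong0_reduces_to0 c : reduces_to c 0 -> rat_cong0 p c.
Proof.
case=> pNd /eqP; rewrite /ratr mulf_eq0 invr_eq0 -!(dvdz_pcharf charFp).
by rewrite (negbTE pNd) orbF /rat_cong0 pNd andbT.
Qed.

Lemma reduces_to_coefA n k : p = (3 * n).+1 \/ p = (3 * n).+2 -> (k <= n)%N ->
  reduces_to (coefA k) ('C(n, k) * 'C(p.-1 - n, k))%:R.
Proof.
move=> p_eq lekn.
have nm0 : n%:R + (p.-1 - n)%:R + 1 = 0 :> F.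
  by rewrite -natrD natr1 (_ : (n + (p.-1 - n)).+1 = p)%N ?(pcharf0 charFp) //; lia.
have prod0 : ((3 * n).+1 * (3 * n).+2)%:R = 0 :> F.
  by case: p_eq => p_eq; rewrite natrM -p_eq (pcharf0 charFp) ?mul0r ?mulr0.
have lekm : (k <= p.-1 - n)%N by lia.
have fact3 := fact_mul3_bin nm0 prod0 lekn lekm.
have den_neq0 : (27 ^ k * k`! ^ 3)%:R != 0 :> F.
  apply: contraNneq (fact_pchar_neq0 (_ : 3 * k < p)%N) => [den0|]; last by lia.
  by rewrite -fact3 den0 mul0r.
have pNden : ~~ (p%:Z %| (27 ^ k * k`! ^ 3)%:Z)%Z.
  by rewrite (dvdz_pcharf charFp) -pmulrn.
have := reduces_to_frac ((3 * k)`!) pNden.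
by rewrite -!pmulrn -fact3 mulrAC divff ?mul1r.
Qed.

End PrimeCharacteristic.

Theorem theorem2p4 (p : nat) (hp : prime p) (hp3 : (3 < p)%N) :
  poly_cong0 p
    (\sum_(0 <= k < (p %/ 3).+1)
        coefA k *: ('X^k - (-1) ^+ (p %/ 3) *: (1 - 'X) ^+ k)).
Proof.
move=> i; have charFp := pchar_Fp hp.
have p_eq := prime_gt3_div3 hp hp3.
have lt2np : (2 * (p %/ 3) < p)%N by lia.
apply: (rat_cong0_reduces_to0 charFp).
have := congr1 (coefp i) (sum_bin_reflection_pchar charFp lt2np); rewrite /= coef0 => <-.
rewrite !big_mkord !coef_sum; apply: (reduces_to_sum charFp) => k _; rewrite !coefZ.
apply: (reduces_toM charFp).
  exact: (reduces_to_coefA charFp p_eq (ltn_ord k : k <= _)%N).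
rewrite !coefB !coefXn !coefZ !coef_1subX_expr.
have := reduces_to_int charFp ((i == k)%:R - (-1) ^+ (p %/ 3) * ((-1) ^+ i * 'C(k, i)%:R)).
by rewrite !(rmorphB, rmorphM, rmorphXn, rmorphN, rmorph1, rmorph_nat).
Qed.
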